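(* Let $a:[0,1]\to[0,\infty)$ be a bounded measurable function (so $a\in L^\infty(0,1)$ and $a\ge 0$). There exist constants $T_0>0$ and $\kappa_0>0$, independent of $N$ (equivalently of $h=1/(N+1)$), such that for every integer $N\ge1$, every $T>T_0$ and all $U^0_h,U^1_h\in\mathbb{C}^N$, the solution $U_h=[u_j]_{1\le j\le N}$ of $$M_hU_h''(t)+K_hU_h(t)+L_hU_h(t)=0\quad (t\in(0,T)),\qquad U_h(0)=U_h^0,\ U_h'(0)=U_h^1,$$ satisfies $$\int_0^T\left(\left|\frac{u_1(t)}{h}\right|^2+\left|\frac{u_1'(t)}{2}\right|^2\right)dt\ \ge\ \kappa_0\left(\|U_h^0\|_1^2+\|U_h^1\|_M^2\right).$$
   Context: For an integer $N\ge1$ let $h=1/(N+1)$ and $x_j=jh$, $0\le j\le N+1$; set $a_j=a(x_j)$. Define the $N\times N$ real matrices $K_h=\frac1h\,\mathrm{tridiag}(-1,2,-1)$ (diagonal entries $2/h$, entries $-1/h$ on the first sub- and super-diagonals, zero elsewhere), $M_h=\frac h4\,\mathrm{tridiag}(1,2,1)$ (diagonal $h/2$, off-diagonal neighbours $h/4$), and $L_h=h\,\mathrm{diag}(a_1,\dots,a_N)$. On $\mathbb{C}^N$ let $\langle U,W\rangle=\sum_j u_j\overline{w_j}$ be the canonical inner product, and define $\langle U,W\rangle_1=\langle (K_h+L_h)U,W\rangle$ and $\langle U,W\rangle_M=\langle M_hU,W\rangle$, with associated norms $\|\cdot\|_1$, $\|\cdot\|_M$. *)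

From Stdlib Require Import Reals.
From mathcomp Require Import classical_sets reals Rstruct Rstruct_topology.
From mathcomp Require Import measure lebesgue_stieltjes_measure lebesgue_measure.
From Coquelicot Require Import Coquelicot.

Local Open Scope R_scope.

(* Stdlib's R seen as a realType, carrying the Borel/Lebesgue measurable structure *)
Definition Rmeas : realType := R.

Definition measurable_on_01 (a : R -> R) : Prop :=
  measurable_fun [set x : Rmeas | 0 <= x <= 1] (a : Rmeas -> Rmeas).

Definition hN (N : nat) : R := / INR (N + 1).

(* A vector of C^N is represented as a map nat -> C; only indices 1..N matter.
   [ext N U] extends it by the Dirichlet convention u_0 = u_{N+1} = 0
   (and 0 outside 1..N), which encodes the tridiagonal structure. *)
Definition ext (N : nat) (U : nat -> C) (j : nat) : C :=
  if andb (Nat.leb 1 j) (Nat.leb j N) then U j else RtoC 0.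

(* K_h = (1/h) tridiag(-1,2,-1) *)
Definition Kop (N : nat) (U : nat -> C) (j : nat) : C :=
  Cmult (RtoC (/ hN N))
    (Cminus (Cminus (Cmult (RtoC 2) (ext N U j)) (ext N U (j - 1))) (ext N U (j + 1))).

(* M_h = (h/4) tridiag(1,2,1) *)
Definition Mop (N : nat) (U : nat -> C) (j : nat) : C :=
  Cmult (RtoC (hN N / 4))
    (Cplus (Cplus (ext N U (j - 1)) (Cmult (RtoC 2) (ext N U j))) (ext N U (j + 1))).

(* L_h = h diag(a(x_1),...,a(x_N)),  x_j = j h *)
Definition Lop (N : nat) (a : R -> R) (U : nat -> C) (j : nat) : C :=
  Cmult (RtoC (hN N * a (INR j * hN N))) (ext N U j).

Fixpoint csum (f : nat -> C) (n : nat) : C :=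
  match n with
  | O => RtoC 0
  | S m => Cplus (csum f m) (f (S m))
  end.

Definition cinner (N : nat) (U W : nat -> C) : C :=
  csum (fun j => Cmult (U j) (Cconj (W j))) N.

(* ||U||_1^2 = <(K_h+L_h)U,U>  (a real number; we take its real part) *)
Definition norm1_sq (N : nat) (a : R -> R) (U : nat -> C) : R :=
  Re (cinner N (fun j => Cplus (Kop N U j) (Lop N a U j)) U).

Definition normM_sq (N : nat) (U : nat -> C) : R :=
  Re (cinner N (Mop N U) U).

Definition is_solution (N : nat) (a : R -> R) (T : R) (U0 U1 : nat -> C)
    (u du ddu : nat -> R -> C) : Prop :=
  (forall j t, (1 <= j <= N)%nat -> is_derive (u j) t (du j t)) /\
  (forall j t, (1 <= j <= N)%nat -> is_derive (du j) t (ddu j t)) /\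
  (forall t, 0 < t < T -> forall j, (1 <= j <= N)%nat ->
     Cplus (Cplus (Mop N (fun k => ddu k t) j) (Kop N (fun k => u k t) j))
           (Lop N a (fun k => u k t) j) = RtoC 0) /\
  (forall j, (1 <= j <= N)%nat -> u j 0 = U0 j /\ du j 0 = U1 j).

Definition observation (N : nat) (T : R) (u du : nat -> R -> C) : R :=
  RInt (fun t => (Cmod (u 1%nat t) / hN N) ^ 2 + (Cmod (du 1%nat t) / 2) ^ 2) 0 T.

(* Real and imaginary parts of a solution solve the same real system, and both the observation
   and [||U0||_1^2 + ||U1||_M^2] split accordingly, so it suffices to treat a real solution, whose
   energy [E = (||U||_1^2 + ||U'||_M^2) / 2] is conserved.  A discrete version [S(t)] of the
   multiplier [int exp (-2 lambda x) u_x u_t dx], with weights [mu^(2k)], [mu = 1/(1 + lambda h)],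
   satisfies [|S| <= E] and, by summation by parts against the decreasing weight together with a
   weighted discrete Poincare inequality absorbing the potential [a],
   [S' + |u_1/h|^2 + |u_1'/2|^2 >= lambda mu^(2N+1) E / (2 (1 + B)) >= obs_rate B * E],
   where [lambda = 4B + 4] and [mu^(2N+1) >= exp (-2 lambda)] uniformly in [N] since [(N+1) h = 1].
   Integrating over [(0, T)] bounds the observation below by [(obs_rate B * T - 2) E], which is at
   least [2 E] once [T > 4 / obs_rate B]. *)

From Stdlib Require Import Reals Lra Lia Psatz.
From Coquelicot Require Import Coquelicot.
Local Open Scope R_scope.

Fixpoint sum_lt (f : nat -> R) (n : nat) : R :=
  match n with O => 0 | S m => sum_lt f m + f m end.

Lemma sum_lt_ext f g n :
  (forall k, (k < n)%nat -> f k = g k) -> sum_lt f n = sum_lt g n.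
Proof.
  induction n as [|n IH]; intros Hfg; simpl; [reflexivity|].
  rewrite IH, Hfg; auto with arith.
Qed.

Lemma sum_lt_plus f g n : sum_lt (fun k => f k + g k) n = sum_lt f n + sum_lt g n.
Proof. induction n as [|n IH]; simpl; [lra|rewrite IH; lra]. Qed.

Lemma sum_lt_scal_l c f n : sum_lt (fun k => c * f k) n = c * sum_lt f n.
Proof. induction n as [|n IH]; simpl; [lra|rewrite IH; lra]. Qed.

Lemma sum_lt_const c n : sum_lt (fun _ => c) n = INR n * c.
Proof. induction n as [|n IH]; simpl sum_lt; [simpl; lra|rewrite IH, S_INR; lra]. Qed.

Lemma sum_lt_le f g n :
  (forall k, (k < n)%nat -> f k <= g k) -> sum_lt f n <= sum_lt g n.
Proof.
  induction n as [|n IH]; intros Hfg; simpl; [lra|].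
  apply Rplus_le_compat; auto with arith.
Qed.

Lemma sum_lt_nonneg f n : (forall k, (k < n)%nat -> 0 <= f k) -> 0 <= sum_lt f n.
Proof.
  intros Hf. rewrite <- (Rmult_0_r (INR n)), <- sum_lt_const. now apply sum_lt_le.
Qed.

Lemma sum_lt_le_prefix f m n :
  (forall k, (k < n)%nat -> 0 <= f k) -> (m <= n)%nat -> sum_lt f m <= sum_lt f n.
Proof.
  intros Hf Hmn. induction Hmn as [|n Hmn IH]; simpl; [lra|].
  assert (0 <= f n) by auto. assert (sum_lt f m <= sum_lt f n) by auto. lra.
Qed.

Lemma sum_lt_telescope x n : sum_lt (fun k => x (S k) - x k) n = x n - x O.
Proof. induction n as [|n IH]; simpl; [lra|rewrite IH; lra]. Qed.

Lemma sum_lt_succ_l f n : sum_lt f (S n) = f O + sum_lt (fun k => f (S k)) n.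
Proof. induction n as [|n IH]; cbn [sum_lt] in *; lra. Qed.

Lemma sum_lt_sqr_le f n : (sum_lt f n) ^ 2 <= INR n * sum_lt (fun k => f k ^ 2) n.
Proof.
  induction n as [|n IH]; cbn [sum_lt]; [simpl; lra|].
  rewrite S_INR. set (s := sum_lt f n) in *. set (s2 := sum_lt (fun k => f k ^ 2) n) in *.
  assert (0 <= s2) by (apply sum_lt_nonneg; intros; nra).
  enough (2 * s * f n <= s2 + INR n * f n ^ 2) by nra.
  destruct (Rle_lt_or_eq_dec 0 (INR n) (pos_INR n)) as [Hn|Hn].
  - apply Rmult_le_reg_l with (INR n); [exact Hn|].
    assert (0 <= (s - INR n * f n) ^ 2) by apply pow2_ge_0. nra.
  - rewrite <- Hn in IH. assert (s = 0) by (apply Rsqr_0_uniq, Rle_antisym; unfold Rsqr; nra).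
    subst s. nra.
Qed.

Lemma sum_lt_mid_le g n :
  (forall k, (k <= n)%nat -> 0 <= g k) ->
  sum_lt (fun k => (g k + g (S k)) / 2) n <= sum_lt g (S n).
Proof.
  intros Hg. enough (sum_lt (fun k => (g k + g (S k)) / 2) n + g n / 2 <= sum_lt g (S n))
    by (assert (0 <= g n) by auto; lra).
  induction n as [|n IH]; cbn [sum_lt] in *.
  - assert (0 <= g O) by auto. lra.
  - assert (0 <= g (S n)) by auto.
    assert (sum_lt (fun k => (g k + g (S k)) / 2) n + g n / 2 <= sum_lt g n + g n) by auto.
    lra.
Qed.

Lemma Rabs_sum_lt_le f n : Rabs (sum_lt f n) <= sum_lt (fun k => Rabs (f k)) n.
Proof.
  induction n as [|n IH]; cbn [sum_lt]; [rewrite Rabs_R0; lra|].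
  eapply Rle_trans; [apply Rabs_triang | lra].
Qed.

Lemma is_derive_sum_lt (f : nat -> R -> R) (df : nat -> R) n t :
  (forall k, (k < n)%nat -> is_derive (f k) t (df k)) ->
  is_derive (fun s => sum_lt (fun k => f k s) n) t (sum_lt df n).
Proof.
  induction n as [|n IH]; intros Hf; cbn [sum_lt].
  - exact (is_derive_const (K := R_AbsRing) (V := R_NormedModule) 0 t).
  - apply (is_derive_plus (fun s => sum_lt (fun k => f k s) n) (f n)); auto with arith.
Qed.

Lemma sum_lt_diff_mul_diff x y n : x O = 0 -> y O = 0 ->
  sum_lt (fun c => (x (S c) - x c) * (y (S c) - y c)) (S n) =
  sum_lt (fun k => y (S k) * (2 * x (S k) - x k - x (S (S k)))) n + y (S n) * (x (S n) - x n).
Proof.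
  intros Hx Hy. induction n as [|n IH].
  - simpl. rewrite Hx, Hy. ring.
  - change (sum_lt (fun c => (x (S c) - x c) * (y (S c) - y c)) (S n)
      + (x (S (S n)) - x (S n)) * (y (S (S n)) - y (S n)) =
      sum_lt (fun k => y (S k) * (2 * x (S k) - x k - x (S (S k)))) (S n)
      + y (S (S n)) * (x (S (S n)) - x (S n))).
    rewrite IH. simpl sum_lt. ring.
Qed.

Lemma sum_lt_add_mul_add x y n : x O = 0 -> y O = 0 ->
  sum_lt (fun c => (x c + x (S c)) * (y c + y (S c))) (S n) =
  sum_lt (fun k => y (S k) * (x k + 2 * x (S k) + x (S (S k)))) n + y (S n) * (x (S n) + x n).
Proof.
  intros Hx Hy. induction n as [|n IH].
  - simpl. rewrite Hx, Hy. ring.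
  - change (sum_lt (fun c => (x c + x (S c)) * (y c + y (S c))) (S n)
      + (x (S n) + x (S (S n))) * (y (S n) + y (S (S n))) =
      sum_lt (fun k => y (S k) * (x k + 2 * x (S k) + x (S (S k)))) (S n)
      + y (S (S n)) * (x (S (S n)) + x (S n))).
    rewrite IH. simpl sum_lt. ring.
Qed.

Definition weight (mu : R) (k : nat) : R := (mu * mu) ^ k.

Lemma weight_nonneg mu k : 0 <= weight mu k.
Proof. apply pow_le, Rle_0_sqr. Qed.

Lemma weight_le_antimono mu c k :
  0 <= mu <= 1 -> (c <= k)%nat -> weight mu k <= weight mu c.
Proof.
  intros Hmu Hck. induction Hck as [|k Hck IH]; [lra|].
  change (weight mu (S k)) with (mu * mu * weight mu k).
  pose proof (weight_nonneg mu k). assert (mu * mu <= 1) by nra. nra.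
Qed.

Lemma weight_le_1 mu k : 0 <= mu <= 1 -> weight mu k <= 1.
Proof. intros Hmu. apply (weight_le_antimono mu 0 k Hmu). lia. Qed.

(* Abel summation, using [weight mu (S k) - weight mu (S (S k)) >= (1 - mu) * weight mu (S k)]. *)
Lemma sum_lt_weight_diff_ge (F : nat -> R) mu n :
  0 < mu <= 1 -> (forall k, 0 <= F k) ->
  sum_lt (fun k => weight mu (S k) * (F (S k) - F k)) (S n) >=
  - weight mu 1 * F O + (1 - mu) * sum_lt (fun k => weight mu (S k) * F (S k)) (S n).
Proof.
  intros Hmu HF.
  enough (sum_lt (fun k => weight mu (S k) * (F (S k) - F k)) (S n) >=
          - weight mu 1 * F O + (1 - mu) * sum_lt (fun k => weight mu (S k) * F (S k)) n
          + weight mu (S n) * F (S n)).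
  { change (sum_lt (fun k => weight mu (S k) * F (S k)) (S n)) with
      (sum_lt (fun k => weight mu (S k) * F (S k)) n + weight mu (S n) * F (S n)).
    assert (0 <= weight mu (S n) * F (S n)) by (apply Rmult_le_pos; [apply weight_nonneg | auto]).
    nra. }
  induction n as [|n IH]; cbn [sum_lt] in *; [lra|].
  change (weight mu (S (S n))) with (mu * mu * weight mu (S n)).
  pose proof (weight_nonneg mu (S n)). pose proof (HF (S n)).
  assert (0 <= weight mu (S n) * F (S n)) by nra.
  assert (mu * mu * (weight mu (S n) * F (S n)) <= mu * (weight mu (S n) * F (S n)))
    by (apply Rmult_le_compat_r; nra).
  nra.
Qed.

Lemma young_weighted al B mu y A :
  0 <= al <= B -> 0 < mu -> al * y * A <= B * y ^ 2 / (2 * mu) + B * mu * A ^ 2 / 2.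
Proof.
  intros Hal Hmu. set (Q := y ^ 2 / (2 * mu) + mu * A ^ 2 / 2).
  assert (HQ : 0 <= Q - y * A).
  { replace (Q - y * A) with ((y - mu * A) ^ 2 * / (2 * mu)) by (unfold Q; field; lra).
    apply Rmult_le_pos; [apply pow2_ge_0 | apply Rlt_le, Rinv_0_lt_compat; lra]. }
  assert (0 <= Q) by (unfold Q; apply Rplus_le_le_0_compat;
    apply Rmult_le_pos; try apply Rlt_le, Rinv_0_lt_compat; nra).
  replace (B * y ^ 2 / (2 * mu) + B * mu * A ^ 2 / 2) with (B * Q) by (unfold Q; field; lra).
  nra.
Qed.

Lemma Rabs_mid_mul_le a b c d :
  Rabs ((a + b) / 2 * ((c + d) / 2)) <= ((a ^ 2 + c ^ 2) / 2 + (b ^ 2 + d ^ 2) / 2) / 2.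
Proof.
  set (A := (a + b) / 2). set (C := (c + d) / 2).
  assert (A ^ 2 <= (a ^ 2 + b ^ 2) / 2) by (pose proof (pow2_ge_0 (a - b)); unfold A; nra).
  assert (C ^ 2 <= (c ^ 2 + d ^ 2) / 2) by (pose proof (pow2_ge_0 (c - d)); unfold C; nra).
  assert (Rabs (A * C) <= (A ^ 2 + C ^ 2) / 2).
  { rewrite Rabs_mult, <- (pow2_abs A), <- (pow2_abs C).
    pose proof (pow2_ge_0 (Rabs A - Rabs C)). nra. }
  lra.
Qed.

Section DiscreteEnergy.

Variables (h : R) (al : nat -> R).
Hypothesis h_pos : 0 < h.

(* [x] holds the nodal values x_0, ..., x_{N+1}; cell [c] is [x_c, x_{c+1}], and
   quantities indexed by [k] at nodes (node_grad, node_avg, stiff, residual) live at x_{k+1}. *)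
Definition cell_grad (x : nat -> R) (c : nat) : R := (x (S c) - x c) / h.
Definition cell_avg (v : nat -> R) (c : nat) : R := (v c + v (S c)) / 2.
Definition cell_energy (x v : nat -> R) (c : nat) : R :=
  (cell_grad x c ^ 2 + cell_avg v c ^ 2) / 2.
Definition node_grad (x : nat -> R) (k : nat) : R := (x (S (S k)) - x k) / (2 * h).
Definition node_avg (v : nat -> R) (k : nat) : R := (v k + 2 * v (S k) + v (S (S k))) / 4.
Definition stiff (x : nat -> R) (k : nat) : R := / h * (2 * x (S k) - x k - x (S (S k))).
Definition residual (x z : nat -> R) (k : nat) : R :=
  h * node_avg z k + stiff x k + h * al k * x (S k).

Definition grad_energy (N : nat) (x v : nat -> R) : R := h * sum_lt (cell_energy x v) (S N).
Definition energy (N : nat) (x v : nat -> R) : R :=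
  grad_energy N x v + h / 2 * sum_lt (fun k => al k * x (S k) ^ 2) N.

(* [weight mu k = mu^(2k)] with [mu = 1/(1 + lambda h)] discretizes [exp (-2 lambda x_k)]. *)
Definition multiplier (N : nat) (mu : R) (x v : nat -> R) : R :=
  sum_lt (fun k => weight mu (S k) * h * (node_grad x k * node_avg v k)) N.
Definition multiplier_rate (N : nat) (mu : R) (x v z : nat -> R) : R :=
  sum_lt (fun k => weight mu (S k) * h *
    (node_grad v k * node_avg v k + node_grad x k * node_avg z k)) N.

Lemma cell_energy_nonneg x v c : 0 <= cell_energy x v c.
Proof. unfold cell_energy. nra. Qed.

Lemma grad_energy_nonneg N x v : 0 <= grad_energy N x v.
Proof.
  unfold grad_energy. apply Rmult_le_pos; [lra|].
  apply sum_lt_nonneg. intros. apply cell_energy_nonneg.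
Qed.

Lemma node_grad_mid x k : node_grad x k = (cell_grad x k + cell_grad x (S k)) / 2.
Proof. unfold node_grad, cell_grad. field. lra. Qed.

Lemma node_avg_mid v k : node_avg v k = (cell_avg v k + cell_avg v (S k)) / 2.
Proof. unfold node_avg, cell_avg. field. Qed.

Lemma cell_energy_succ x v z k :
  cell_energy x v (S k) - cell_energy x v k =
  h * (node_grad v k * node_avg v k + node_grad x k * node_avg z k)
  + h * al k * x (S k) * node_grad x k - node_grad x k * residual x z k.
Proof. unfold residual, stiff, cell_energy, cell_grad, cell_avg, node_grad, node_avg. field. lra. Qed.

Lemma nodal_value_sum x k : x O = 0 -> x k = h * sum_lt (cell_grad x) k.
Proof.
  intros Hx. rewrite <- sum_lt_scal_l.
  rewrite (sum_lt_ext _ (fun c => x (S c) - x c)); [rewrite sum_lt_telescope, Hx; lra|].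
  intros. unfold cell_grad. field. lra.
Qed.

Lemma energy_nonneg N x v : (forall k, (k < N)%nat -> 0 <= al k) -> 0 <= energy N x v.
Proof.
  intros Hal. unfold energy. apply Rplus_le_le_0_compat; [apply grad_energy_nonneg|].
  apply Rmult_le_pos; [lra|]. apply sum_lt_nonneg. intros k Hk. pose proof (Hal k Hk). nra.
Qed.

Lemma energy_ext N x x' v v' :
  (forall k, x k = x' k) -> (forall k, v k = v' k) -> energy N x v = energy N x' v'.
Proof.
  intros Hx Hv. unfold energy, grad_energy.
  rewrite (sum_lt_ext (cell_energy x v) (cell_energy x' v'))
    by (intros; unfold cell_energy, cell_grad, cell_avg; now rewrite !Hx, !Hv).
  rewrite (sum_lt_ext (fun k => al k * x (S k) ^ 2) (fun k => al k * x' (S k) ^ 2))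
    by (intros; now rewrite Hx).
  reflexivity.
Qed.

Lemma weighted_nodal_value_le N mu x k :
  INR N * h <= 1 -> 0 <= mu <= 1 -> x O = 0 -> (k < N)%nat ->
  weight mu (S k) * x (S k) ^ 2
  <= h * (mu * mu * sum_lt (fun c => weight mu c * cell_grad x c ^ 2) (S N)).
Proof.
  intros HN Hmu Hx Hk.
  set (W := sum_lt (fun c => weight mu c * cell_grad x c ^ 2) (S N)).
  set (L2 := sum_lt (fun c => cell_grad x c ^ 2) (S k)).
  assert (HL2 : weight mu (S k) * L2 <= mu * mu * W).
  { unfold L2. rewrite <- sum_lt_scal_l.
    apply Rle_trans with (sum_lt (fun c => mu * mu * (weight mu c * cell_grad x c ^ 2)) (S k)).
    - apply sum_lt_le. intros c Hc. change (weight mu (S k)) with (mu * mu * weight mu k).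
      pose proof (weight_le_antimono mu c k Hmu ltac:(lia)).
      assert (0 <= cell_grad x c ^ 2) by nra. assert (0 <= mu * mu) by nra.
      rewrite Rmult_assoc. apply Rmult_le_compat_l; [lra|]. now apply Rmult_le_compat_r.
    - rewrite sum_lt_scal_l. apply Rmult_le_compat_l; [nra|]. apply sum_lt_le_prefix; [|lia].
      intros c _. pose proof (weight_nonneg mu c). nra. }
  assert (Hkh : INR (S k) * h <= 1).
  { apply Rle_trans with (INR N * h); [|exact HN].
    apply Rmult_le_compat_r; [lra|]. apply le_INR. lia. }
  rewrite (nodal_value_sum x (S k) Hx).
  pose proof (sum_lt_sqr_le (cell_grad x) (S k)) as CS. fold L2 in CS.
  set (L := sum_lt (cell_grad x) (S k)) in *.
  pose proof (weight_nonneg mu (S k)). pose proof (pos_INR (S k)).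
  assert (weight mu (S k) * L ^ 2 <= INR (S k) * (mu * mu * W)).
  { apply Rle_trans with (weight mu (S k) * (INR (S k) * L2)); [now apply Rmult_le_compat_l|].
    replace (weight mu (S k) * (INR (S k) * L2)) with (INR (S k) * (weight mu (S k) * L2)) by ring.
    now apply Rmult_le_compat_l. }
  assert (0 <= mu * mu * W).
  { apply Rmult_le_pos; [nra|]. apply sum_lt_nonneg. intros c _.
    pose proof (weight_nonneg mu c). nra. }
  assert (INR (S k) * h * (mu * mu * W) <= mu * mu * W) by nra.
  replace (weight mu (S k) * (h * L) ^ 2) with (h * h * (weight mu (S k) * L ^ 2)) by ring.
  nra.
Qed.

Lemma weighted_poincare N mu x :
  INR N * h <= 1 -> 0 <= mu <= 1 -> x O = 0 ->
  sum_lt (fun k => weight mu (S k) * x (S k) ^ 2) N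
  <= mu * mu * sum_lt (fun c => weight mu c * cell_grad x c ^ 2) (S N).
Proof.
  intros HN Hmu Hx.
  set (W := sum_lt (fun c => weight mu c * cell_grad x c ^ 2) (S N)).
  assert (HW : 0 <= mu * mu * W).
  { apply Rmult_le_pos; [nra|]. apply sum_lt_nonneg. intros c _.
    pose proof (weight_nonneg mu c). nra. }
  apply Rle_trans with (sum_lt (fun _ => h * (mu * mu * W)) N).
  - apply sum_lt_le. intros k Hk. now apply weighted_nodal_value_le.
  - rewrite sum_lt_const, <- Rmult_assoc. rewrite <- (Rmult_1_l (mu * mu * W)) at 2.
    now apply Rmult_le_compat_r.
Qed.

Lemma weighted_node_grad_le N mu x :
  0 <= mu <= 1 ->
  sum_lt (fun k => weight mu (S k) * node_grad x k ^ 2) N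
  <= sum_lt (fun c => weight mu c * cell_grad x c ^ 2) (S N).
Proof.
  intros Hmu. eapply Rle_trans;
    [|apply sum_lt_mid_le; intros c _; pose proof (weight_nonneg mu c); nra].
  apply sum_lt_le. intros k _. rewrite node_grad_mid.
  pose proof (weight_le_antimono mu k (S k) Hmu ltac:(lia)). pose proof (weight_nonneg mu (S k)).
  set (a := cell_grad x k). set (b := cell_grad x (S k)).
  assert (((a + b) / 2) ^ 2 <= (a ^ 2 + b ^ 2) / 2) by (pose proof (pow2_ge_0 (a - b)); nra).
  assert (weight mu (S k) * ((a + b) / 2) ^ 2 <= weight mu (S k) * ((a ^ 2 + b ^ 2) / 2))
    by (apply Rmult_le_compat_l; lra).
  assert (0 <= a ^ 2) by nra.
  nra.
Qed.

Lemma weighted_potential_le N B mu x :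
  INR N * h <= 1 -> 0 <= B -> (forall k, (k < N)%nat -> 0 <= al k <= B) ->
  0 < mu <= 1 -> x O = 0 ->
  sum_lt (fun k => weight mu (S k) * (h * al k * x (S k) * node_grad x k)) N
  <= B * mu * h * sum_lt (fun c => weight mu c * cell_grad x c ^ 2) (S N).
Proof.
  intros HN HB Hal Hmu Hx.
  set (W := sum_lt (fun c => weight mu c * cell_grad x c ^ 2) (S N)).
  apply Rle_trans with (B * h / (2 * mu) * sum_lt (fun k => weight mu (S k) * x (S k) ^ 2) N
    + B * h * mu / 2 * sum_lt (fun k => weight mu (S k) * node_grad x k ^ 2) N).
  - rewrite <- !sum_lt_scal_l, <- sum_lt_plus. apply sum_lt_le. intros k Hk.
    pose proof (young_weighted (al k) B mu (x (S k)) (node_grad x k) (Hal k Hk) ltac:(lra)).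
    assert (0 <= weight mu (S k) * h) by (pose proof (weight_nonneg mu (S k)); nra).
    replace (weight mu (S k) * (h * al k * x (S k) * node_grad x k))
      with (weight mu (S k) * h * (al k * x (S k) * node_grad x k)) by ring.
    eapply Rle_trans; [apply Rmult_le_compat_l; eassumption|]. right. field. lra.
  - pose proof (weighted_poincare N mu x HN ltac:(lra) Hx) as HP.
    pose proof (weighted_node_grad_le N mu x ltac:(lra)) as HG. fold W in HP, HG.
    assert (0 <= B * h / (2 * mu))
      by (apply Rmult_le_pos; [nra|apply Rlt_le, Rinv_0_lt_compat; lra]).
    assert (0 <= B * h * mu / 2) by (unfold Rdiv; repeat apply Rmult_le_pos; lra).
    apply Rle_trans with (B * h / (2 * mu) * (mu * mu * W) + B * h * mu / 2 * W).
    + apply Rplus_le_compat; now apply Rmult_le_compat_l.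
    + right. field. lra.
Qed.

Lemma energy_bounds N B x v :
  INR N * h <= 1 -> 0 <= B -> (forall k, (k < N)%nat -> 0 <= al k <= B) -> x O = 0 ->
  grad_energy N x v <= energy N x v <= (1 + B) * grad_energy N x v.
Proof.
  intros HN HB Hal Hx. unfold energy.
  assert (H0 : 0 <= sum_lt (fun k => al k * x (S k) ^ 2) N).
  { apply sum_lt_nonneg. intros k Hk. pose proof (Hal k Hk). nra. }
  assert (H1 : sum_lt (fun k => al k * x (S k) ^ 2) N
               <= B * sum_lt (fun k => weight 1 (S k) * x (S k) ^ 2) N).
  { rewrite <- sum_lt_scal_l. apply sum_lt_le. intros k Hk. unfold weight.
    rewrite Rmult_1_l, pow1. pose proof (Hal k Hk). nra. }
  pose proof (weighted_poincare N 1 x HN ltac:(lra) Hx) as H2.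
  assert (H3 : sum_lt (fun c => weight 1 c * cell_grad x c ^ 2) (S N)
               <= 2 * sum_lt (cell_energy x v) (S N)).
  { rewrite <- sum_lt_scal_l. apply sum_lt_le. intros c _. unfold weight, cell_energy.
    rewrite Rmult_1_l, pow1. nra. }
  unfold grad_energy. split.
  - assert (0 <= h / 2 * sum_lt (fun k => al k * x (S k) ^ 2) N) by (apply Rmult_le_pos; lra).
    lra.
  - assert (sum_lt (fun k => al k * x (S k) ^ 2) N <= B * (2 * sum_lt (cell_energy x v) (S N)))
      by (apply (Rle_trans _ _ _ H1), Rmult_le_compat_l; lra).
    assert (h / 2 * sum_lt (fun k => al k * x (S k) ^ 2) N
            <= h / 2 * (B * (2 * sum_lt (cell_energy x v) (S N)))) by (apply Rmult_le_compat_l; lra).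
    nra.
Qed.

Lemma energy_quadratic_form N x v :
  x O = 0 -> x (S N) = 0 -> v O = 0 -> v (S N) = 0 ->
  sum_lt (fun k => (stiff x k + h * al k * x (S k)) * x (S k)) N
  + sum_lt (fun k => h * node_avg v k * v (S k)) N = 2 * energy N x v.
Proof.
  intros Hx0 HxN Hv0 HvN.
  pose proof (sum_lt_diff_mul_diff x x N Hx0 Hx0) as Dx.
  pose proof (sum_lt_add_mul_add v v N Hv0 Hv0) as Av.
  rewrite HxN in Dx. rewrite HvN in Av.
  unfold energy, grad_energy.
  rewrite (sum_lt_ext (cell_energy x v)
             (fun c => / (2 * h * h) * ((x (S c) - x c) * (x (S c) - x c))
                       + / 8 * ((v c + v (S c)) * (v c + v (S c)))))
    by (intros; unfold cell_energy, cell_grad, cell_avg; field; lra).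
  rewrite sum_lt_plus, !sum_lt_scal_l, Dx, Av.
  rewrite (sum_lt_ext (fun k => (stiff x k + h * al k * x (S k)) * x (S k))
             (fun k => / h * (x (S k) * (2 * x (S k) - x k - x (S (S k))))
                       + h * (al k * x (S k) ^ 2)))
    by (intros; unfold stiff; ring).
  rewrite (sum_lt_ext (fun k => h * node_avg v k * v (S k))
             (fun k => h / 4 * (v (S k) * (v k + 2 * v (S k) + v (S (S k))))))
    by (intros; unfold node_avg; field).
  rewrite sum_lt_plus, !sum_lt_scal_l. field. lra.
Qed.

Lemma energy_power N x v z :
  x O = 0 -> v O = 0 -> z O = 0 -> v (S N) = 0 ->
  h * sum_lt (fun c => cell_grad x c * cell_grad v c + cell_avg v c * cell_avg z c) (S N)
  + h * sum_lt (fun k => al k * x (S k) * v (S k)) N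
  = sum_lt (fun k => v (S k) * residual x z k) N.
Proof.
  intros Hx0 Hv0 Hz0 HvN.
  pose proof (sum_lt_diff_mul_diff x v N Hx0 Hv0) as Dxv.
  pose proof (sum_lt_add_mul_add z v N Hz0 Hv0) as Azv.
  rewrite HvN in Dxv, Azv.
  rewrite (sum_lt_ext (fun c => cell_grad x c * cell_grad v c + cell_avg v c * cell_avg z c)
             (fun c => / (h * h) * ((x (S c) - x c) * (v (S c) - v c))
                                 + / 4 * ((z c + z (S c)) * (v c + v (S c)))))
    by (intros; unfold cell_grad, cell_avg; field; lra).
  rewrite sum_lt_plus, !sum_lt_scal_l, Dxv, Azv.
  rewrite (sum_lt_ext (fun k => v (S k) * residual x z k)
             (fun k => / h * (v (S k) * (2 * x (S k) - x k - x (S (S k))))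
                       + h / 4 * (v (S k) * (z k + 2 * z (S k) + z (S (S k))))
                       + h * (al k * x (S k) * v (S k))))
    by (intros; unfold residual, stiff, node_avg; field; lra).
  rewrite !sum_lt_plus, !sum_lt_scal_l. field. lra.
Qed.

Lemma grad_energy_weighted_le N mu x v :
  0 <= mu <= 1 ->
  weight mu N * grad_energy N x v <= h * sum_lt (fun c => weight mu c * cell_energy x v c) (S N).
Proof.
  intros Hmu. unfold grad_energy.
  rewrite <- Rmult_assoc, (Rmult_comm (weight mu N) h), Rmult_assoc.
  apply Rmult_le_compat_l; [lra|]. rewrite <- sum_lt_scal_l. apply sum_lt_le. intros c Hc.
  pose proof (weight_le_antimono mu c N Hmu ltac:(lia)). pose proof (cell_energy_nonneg x v c).
  nra.
Qed.

Lemma Rabs_multiplier_le N mu x v :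
  0 <= mu <= 1 -> Rabs (multiplier N mu x v) <= grad_energy N x v.
Proof.
  intros Hmu. unfold multiplier, grad_energy.
  eapply Rle_trans; [apply Rabs_sum_lt_le|].
  apply Rle_trans with (sum_lt (fun k => h * ((cell_energy x v k + cell_energy x v (S k)) / 2)) N).
  - apply sum_lt_le. intros k _. rewrite node_grad_mid, node_avg_mid.
    pose proof (weight_nonneg mu (S k)). pose proof (weight_le_1 mu (S k) Hmu).
    pose proof (Rabs_mid_mul_le (cell_grad x k) (cell_grad x (S k))
                  (cell_avg v k) (cell_avg v (S k))) as Hmid.
    set (M := (cell_grad x k + cell_grad x (S k)) / 2 * ((cell_avg v k + cell_avg v (S k)) / 2)).
    rewrite Rabs_mult, (Rabs_pos_eq (weight mu (S k) * h)) by nra.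
    apply Rle_trans with (1 * (h * Rabs M)).
    + rewrite Rmult_assoc. apply Rmult_le_compat_r; [|lra].
      apply Rmult_le_pos; [lra | apply Rabs_pos].
    + rewrite Rmult_1_l. apply Rmult_le_compat_l; [lra | exact Hmid].
  - rewrite sum_lt_scal_l. apply Rmult_le_compat_l; [lra|].
    apply sum_lt_mid_le. intros. apply cell_energy_nonneg.
Qed.

(* The potential term costs at most [2 B mu] times the weighted energy (weighted_potential_le),
   so any [lambda > 2 B] would do; [lambda = 4 B + 4] leaves the margin [lambda / 2]. *)
Lemma multiplier_rate_lower N B mu x v z :
  (1 <= N)%nat -> INR N * h <= 1 -> 0 <= B -> (forall k, (k < N)%nat -> 0 <= al k <= B) ->
  0 < mu <= 1 -> 1 - mu = (4 * B + 4) * mu * h -> x O = 0 ->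
  (forall k, (k < N)%nat -> residual x z k = 0) ->
  multiplier_rate N mu x v z + 2 * cell_energy x v O
  >= (4 * B + 4) * mu / 2 * (h * sum_lt (fun c => weight mu c * cell_energy x v c) (S N)).
Proof.
  intros HN1 HN HB Hal Hmu Hlam Hx Hres.
  set (F := cell_energy x v).
  set (P := sum_lt (fun k => weight mu (S k) * (h * al k * x (S k) * node_grad x k)) N).
  set (L := sum_lt (fun k => weight mu (S k) * F (S k)) N).
  set (Q := sum_lt (fun c => weight mu c * F c) (S N)).
  set (W := sum_lt (fun c => weight mu c * cell_grad x c ^ 2) (S N)).
  assert (Hsplit : sum_lt (fun k => weight mu (S k) * (F (S k) - F k)) N
                   = multiplier_rate N mu x v z + P).
  { unfold multiplier_rate, P. rewrite <- sum_lt_plus. apply sum_lt_ext. intros k Hk.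
    unfold F. rewrite (cell_energy_succ x v z k), (Hres k Hk). ring. }
  assert (Habel : sum_lt (fun k => weight mu (S k) * (F (S k) - F k)) N
                  >= - (mu * mu) * F O + (1 - mu) * L).
  { destruct N as [|n]; [lia|].
    replace (mu * mu) with (weight mu 1) by (unfold weight; ring).
    apply sum_lt_weight_diff_ge; [lra|]. intros; apply cell_energy_nonneg. }
  assert (HQ : Q = F O + L).
  { unfold Q, L. rewrite sum_lt_succ_l. unfold weight at 1. simpl pow. ring. }
  assert (HP : P <= B * mu * h * W) by (apply weighted_potential_le; auto).
  assert (HW : W <= 2 * Q).
  { unfold W, Q. rewrite <- sum_lt_scal_l. apply sum_lt_le. intros c _.
    pose proof (weight_nonneg mu c). unfold F, cell_energy. nra. }
  assert (HF0 : 0 <= F O) by apply cell_energy_nonneg.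
  assert (HL : 0 <= L) by (apply sum_lt_nonneg; intros k _;
    apply Rmult_le_pos; [apply weight_nonneg | apply cell_energy_nonneg]).
  set (X := mu * h * Q).
  assert (HX : 0 <= X) by (unfold X; repeat apply Rmult_le_pos; lra).
  assert (HBW : B * mu * h * W <= 2 * B * X).
  { unfold X. replace (2 * B * (mu * h * Q)) with (B * mu * h * (2 * Q)) by ring.
    apply Rmult_le_compat_l; [repeat apply Rmult_le_pos|]; lra. }
  assert (HLX : (1 - mu) * L = (4 * B + 4) * X - (1 - mu) * F O)
    by (unfold X; rewrite HQ, Hlam; ring).
  replace ((4 * B + 4) * mu / 2 * (h * Q)) with ((2 * B + 2) * X) by (unfold X; field).
  assert (mu * mu * F O <= mu * F O) by (apply Rmult_le_compat_r; nra).
  nra.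
Qed.

Lemma multiplier_rate_energy_lower N B mu x v z :
  (1 <= N)%nat -> INR N * h <= 1 -> 0 <= B -> (forall k, (k < N)%nat -> 0 <= al k <= B) ->
  0 < mu <= 1 -> 1 - mu = (4 * B + 4) * mu * h -> x O = 0 ->
  (forall k, (k < N)%nat -> residual x z k = 0) ->
  (4 * B + 4) * (mu * weight mu N) / (2 * (1 + B)) * energy N x v
  <= multiplier_rate N mu x v z + 2 * cell_energy x v O.
Proof.
  intros HN1 HN HB Hal Hmu Hlam Hx Hres.
  pose proof (multiplier_rate_lower N B mu x v z HN1 HN HB Hal Hmu Hlam Hx Hres) as Hrate.
  pose proof (grad_energy_weighted_le N mu x v ltac:(lra)) as Hw.
  destruct (energy_bounds N B x v HN HB Hal Hx) as [_ Hen].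
  pose proof (weight_nonneg mu N) as Hw0.
  assert (Hc : 0 <= (4 * B + 4) * mu / 2) by (apply Rmult_le_pos; nra).
  apply Rle_trans with ((4 * B + 4) * mu / 2 * (weight mu N * grad_energy N x v)); [|nra].
  replace ((4 * B + 4) * (mu * weight mu N) / (2 * (1 + B)) * energy N x v)
    with ((4 * B + 4) * mu / 2 * (weight mu N * (energy N x v / (1 + B)))) by (field; lra).
  apply Rmult_le_compat_l, Rmult_le_compat_l; [exact Hc | exact Hw0|].
  apply Rmult_le_reg_l with (1 + B); [lra|].
  replace ((1 + B) * (energy N x v / (1 + B))) with (energy N x v) by (field; lra).
  exact Hen.
Qed.

End DiscreteEnergy.

Lemma exp_le_weight lam h N :
  0 <= lam -> 0 < h -> INR (N + 1) * h = 1 ->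
  exp (- (2 * lam)) <= / (1 + lam * h) * weight (/ (1 + lam * h)) N.
Proof.
  intros Hlam Hh HN. set (p := 1 + lam * h).
  assert (Hp : 0 < p) by (unfold p; nra).
  unfold weight. rewrite <- Rinv_mult, pow_inv, <- Rinv_mult, exp_Ropp.
  apply Rinv_le_contravar; [apply Rmult_lt_0_compat; [|apply pow_lt]; nra|].
  assert (Hpe : p <= exp (lam * h)) by apply exp_ineq1_le.
  assert (Hpow : (p * p) ^ N <= exp (INR N * (2 * (lam * h)))).
  { replace (exp (INR N * (2 * (lam * h)))) with ((exp (lam * h) * exp (lam * h)) ^ N).
    - apply pow_incr. nra.
    - rewrite <- exp_plus, <- Rpower_pow by apply exp_pos. unfold Rpower. rewrite ln_exp.
      f_equal. ring. }
  apply Rle_trans with (exp (lam * h) * exp (INR N * (2 * (lam * h)))).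
  - apply Rmult_le_compat; [lra | apply pow_le; nra | exact Hpe | exact Hpow].
  - rewrite <- exp_plus. rewrite plus_INR in HN. simpl in HN.
    destruct (Req_dec lam 0) as [->|Hl]; [right; f_equal; ring|].
    left. apply exp_increasing. pose proof (pos_INR N). nra.
Qed.

Lemma Rle_of_is_derive_nonneg f df a b :
  a <= b -> (forall t, is_derive f t (df t)) -> (forall t, a < t < b -> 0 <= df t) ->
  f a <= f b.
Proof.
  intros Hab Hf Hdf. destruct (Req_dec a b) as [<-|Hne]; [lra|].
  destruct (MVT_cor2 f df a b ltac:(lra)) as [c [Hmvt Hc]].
  - intros c _. apply is_derive_Reals, Hf.
  - assert (0 <= df c) by (apply Hdf; lra). nra.
Qed.

Lemma is_derive_RInt_0 (g : R -> R) t :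
  (forall s, continuous g s) -> is_derive (fun s => RInt g 0 s) t (g t).
Proof.
  intros Hg. apply (is_derive_RInt (V := R_CompleteNormedModule) g _ 0 t); [|apply Hg].
  apply filter_forall. intros b. apply RInt_correct, ex_RInt_continuous. intros; apply Hg.
Qed.

(* [S + int_0^. g - K t] is nondecreasing, and the variation of [S] is at most [2 E]. *)
Lemma RInt_ge_of_multiplier (S dS g : R -> R) K E T :
  0 <= T -> (forall t, is_derive S t (dS t)) -> (forall t, continuous g t) ->
  (forall t, 0 < t < T -> K <= dS t + g t) -> Rabs (S 0) <= E -> Rabs (S T) <= E ->
  K * T - 2 * E <= RInt g 0 T.
Proof.
  intros HT HS Hg HK HS0 HST.
  assert (Hmono : S 0 + RInt g 0 0 - K * 0 <= S T + RInt g 0 T - K * T).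
  { apply (Rle_of_is_derive_nonneg (fun t => S t + RInt g 0 t - K * t)
             (fun t => dS t + g t - K)); [exact HT| |].
    - intros t. apply (is_derive_minus (fun t => S t + RInt g 0 t) (fun t => K * t)).
      + apply (is_derive_plus S (fun t => RInt g 0 t)); [apply HS | now apply is_derive_RInt_0].
      + auto_derive; [exact I | ring].
    - intros t Ht. pose proof (HK t Ht). lra. }
  rewrite RInt_point in Hmono. unfold zero in Hmono. simpl in Hmono.
  pose proof (Rle_abs (- S 0)). pose proof (Rle_abs (S T)). rewrite Rabs_Ropp in *.
  lra.
Qed.

Definition obs_rate (B : R) : R := (4 * B + 4) * exp (- (2 * (4 * B + 4))) / (2 * (1 + B)).

Lemma obs_rate_pos B : 0 <= B -> 0 < obs_rate B.
Proof.
  intros HB. unfold obs_rate. apply Rmult_lt_0_compat; [apply Rmult_lt_0_compat|];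
    [lra | apply exp_pos | apply Rinv_0_lt_compat; lra].
Qed.

Lemma continuous_obs_integrand (f g : R -> R) h t :
  (forall s, ex_derive f s) -> (forall s, ex_derive g s) ->
  continuous (fun s => (f s / h) ^ 2 + (g s / 2) ^ 2) t.
Proof.
  intros Hf Hg. apply (ex_derive_continuous (K := R_AbsRing) (V := R_NormedModule)).
  auto_derive. auto.
Qed.

Section RealTrajectory.

Variables (N : nat) (h B T : R) (al : nat -> R) (X V Z : nat -> R -> R).
Hypotheses (N_ge1 : (1 <= N)%nat) (Nh : INR (N + 1) * h = 1) (h_pos : 0 < h)
  (B_ge0 : 0 <= B) (al_bound : forall k, (k < N)%nat -> 0 <= al k <= B) (T_ge0 : 0 <= T).
Hypotheses (X_deriv : forall k t, is_derive (X k) t (V k t))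
  (V_deriv : forall k t, is_derive (V k) t (Z k t)).
Hypotheses (X_0 : forall t, X O t = 0)
  (V_0 : forall t, V O t = 0) (V_SN : forall t, V (S N) t = 0) (Z_0 : forall t, Z O t = 0).

Let x t : nat -> R := fun k => X k t.
Let v t : nat -> R := fun k => V k t.
Let z t : nat -> R := fun k => Z k t.

Hypothesis equation :
  forall t, 0 < t < T -> forall k, (k < N)%nat -> residual h al (x t) (z t) k = 0.

Lemma Nh_le1 : INR N * h <= 1.
Proof. rewrite plus_INR in Nh. simpl in Nh. lra. Qed.

Let ex_derive_X k t : ex_derive (fun s => X k s) t := ex_intro _ _ (X_deriv k t).
Let ex_derive_V k t : ex_derive (fun s => V k s) t := ex_intro _ _ (V_deriv k t).
Let Derive_X k t : Derive (fun s => X k s) t = V k t := is_derive_unique _ _ _ (X_deriv k t).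
Let Derive_V k t : Derive (fun s => V k s) t = Z k t := is_derive_unique _ _ _ (V_deriv k t).

Lemma is_derive_cell_energy c t :
  is_derive (fun s => cell_energy h (x s) (v s) c) t
    (cell_grad h (x t) c * cell_grad h (v t) c + cell_avg (v t) c * cell_avg (z t) c).
Proof.
  unfold cell_energy, cell_grad, cell_avg, x, v, z. auto_derive.
  - repeat split; auto.
  - rewrite !Derive_X, !Derive_V. field. lra.
Qed.

Lemma is_derive_energy t :
  is_derive (fun s => energy h al N (x s) (v s)) t
    (sum_lt (fun k => v t (S k) * residual h al (x t) (z t) k) N).
Proof.
  rewrite <- energy_power by (unfold x, v, z; auto). unfold energy, grad_energy.
  apply (is_derive_plus (fun s => h * sum_lt (cell_energy h (x s) (v s)) (S N))
                        (fun s => h / 2 * sum_lt (fun k => al k * x s (S k) ^ 2) N)).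
  - apply (is_derive_scal (fun s => sum_lt (cell_energy h (x s) (v s)) (S N))).
    apply (is_derive_sum_lt (fun c s => cell_energy h (x s) (v s) c)).
    intros c _. apply is_derive_cell_energy.
  - rewrite (sum_lt_ext (fun k => al k * x t (S k) * v t (S k))
               (fun k => / 2 * (al k * (2 * x t (S k) * v t (S k))))) by (intros; field).
    rewrite sum_lt_scal_l, <- Rmult_assoc.
    apply (is_derive_scal (fun s => sum_lt (fun k => al k * x s (S k) ^ 2) N)).
    apply (is_derive_sum_lt (fun k s => al k * x s (S k) ^ 2)).
    intros k _. unfold x, v. auto_derive; [auto | rewrite Derive_X; ring].
Qed.

Lemma energy_conserved t : 0 <= t <= T -> energy h al N (x t) (v t) = energy h al N (x 0) (v 0).
Proof.
  intros Ht.
  set (dE := fun s => sum_lt (fun k => v s (S k) * residual h al (x s) (z s) k) N).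
  assert (HdE : forall s, 0 < s < t -> dE s = 0).
  { intros s Hs. unfold dE. rewrite (sum_lt_ext _ (fun _ => 0)), sum_lt_const; [ring|].
    intros k Hk. rewrite equation by (auto; lra). ring. }
  apply Rle_antisym.
  - enough (- energy h al N (x 0) (v 0) <= - energy h al N (x t) (v t)) by lra.
    apply (Rle_of_is_derive_nonneg (fun s => - energy h al N (x s) (v s)) (fun s => - dE s));
      [lra | |intros s Hs; rewrite HdE by exact Hs; lra].
    intros s. apply (is_derive_opp (fun s => energy h al N (x s) (v s))), is_derive_energy.
  - apply (Rle_of_is_derive_nonneg (fun s => energy h al N (x s) (v s)) dE);
      [lra | apply is_derive_energy |].
    intros s Hs. rewrite HdE by exact Hs. lra.
Qed.

Lemma is_derive_multiplier mu t :
  is_derive (fun s => multiplier h N mu (x s) (v s)) t (multiplier_rate h N mu (x t) (v t) (z t)).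
Proof.
  apply (is_derive_sum_lt
    (fun k s => weight mu (S k) * h * (node_grad h (x s) k * node_avg (v s) k))).
  intros k _. unfold node_grad, node_avg, x, v, z. auto_derive.
  - repeat split; auto.
  - rewrite !Derive_X, !Derive_V. field. lra.
Qed.

Lemma observability_real :
  RInt (fun t => (X 1%nat t / h) ^ 2 + (V 1%nat t / 2) ^ 2) 0 T
  >= (obs_rate B * T - 2) * energy h al N (x 0) (v 0).
Proof.
  set (lam := 4 * B + 4). set (mu := / (1 + lam * h)). set (E := energy h al N (x 0) (v 0)).
  assert (Hmu : 0 < mu <= 1).
  { unfold mu. split; [apply Rinv_0_lt_compat; unfold lam; nra|].
    rewrite <- Rinv_1. apply Rinv_le_contravar; unfold lam; nra. }
  assert (Hlam : 1 - mu = lam * mu * h) by (unfold mu; field; unfold lam; nra).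
  assert (Hen : forall t, 0 <= t <= T ->
            grad_energy h N (x t) (v t) <= E <= (1 + B) * grad_energy h N (x t) (v t)).
  { intros t Ht. unfold E. rewrite <- (energy_conserved t Ht).
    apply (energy_bounds h al h_pos N B); auto using Nh_le1. apply X_0. }
  assert (Hobs : forall t, (X 1%nat t / h) ^ 2 + (V 1%nat t / 2) ^ 2
                           = 2 * cell_energy h (x t) (v t) O).
  { intros t. unfold cell_energy, cell_grad, cell_avg, x, v. rewrite X_0, V_0. field. lra. }
  assert (HS : forall t, 0 <= t <= T -> Rabs (multiplier h N mu (x t) (v t)) <= E).
  { intros t Ht. eapply Rle_trans; [apply Rabs_multiplier_le; lra|]. apply Hen, Ht. }
  apply Rle_ge. replace ((obs_rate B * T - 2) * E) with ((obs_rate B * E) * T - 2 * E) by ring.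
  apply (RInt_ge_of_multiplier _ _ _ _ _ _ T_ge0 (is_derive_multiplier mu)).
  - intros t. apply continuous_obs_integrand; auto.
  - intros t Ht. rewrite Hobs.
    apply Rle_trans with (lam * (mu * weight mu N) / (2 * (1 + B)) * E).
    + assert (0 <= E) by (apply energy_nonneg; [exact h_pos | intros k Hk; apply al_bound, Hk]).
      pose proof (exp_le_weight lam h N ltac:(unfold lam; lra) h_pos Nh) as Hexp. fold mu in Hexp.
      unfold obs_rate. fold lam.
      apply Rmult_le_compat_r; [assumption|].
      unfold Rdiv. apply Rmult_le_compat_r; [apply Rlt_le, Rinv_0_lt_compat; lra|].
      apply Rmult_le_compat_l; [unfold lam; lra | exact Hexp].
    + unfold E. rewrite <- (energy_conserved t ltac:(lra)).
      apply multiplier_rate_energy_lower; auto using Nh_le1. apply X_0.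
  - apply HS. lra.
  - apply HS. lra.
Qed.

End RealTrajectory.

Lemma ext_in N U j : (1 <= j <= N)%nat -> ext N U j = U j.
Proof.
  intros Hj. unfold ext.
  replace (andb (Nat.leb 1 j) (Nat.leb j N)) with true; [reflexivity|].
  symmetry. apply Bool.andb_true_iff. split; apply Nat.leb_le; lia.
Qed.

Lemma ext_ext N U W : (forall j, (1 <= j <= N)%nat -> U j = W j) ->
  forall j, ext N U j = ext N W j.
Proof.
  intros HUW j. unfold ext. destruct (andb (Nat.leb 1 j) (Nat.leb j N)) eqn:E; [|reflexivity].
  apply Bool.andb_true_iff in E as [E1 E2]. apply Nat.leb_le in E1, E2. apply HUW. lia.
Qed.

Lemma hN_pos N : 0 < hN N.
Proof. apply Rinv_0_lt_compat, lt_0_INR. lia. Qed.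

Lemma hN_spec N : INR (N + 1) * hN N = 1.
Proof. apply Rinv_r, not_0_INR. lia. Qed.

Lemma grid_node_in_01 N k : (k < N)%nat -> 0 <= INR (S k) * hN N <= 1.
Proof.
  intros Hk. pose proof (hN_pos N). split; [apply Rmult_le_pos; [apply pos_INR | lra]|].
  rewrite <- (hN_spec N). apply Rmult_le_compat_r; [lra|]. apply le_INR. lia.
Qed.

Section Projection.

Variable p : C -> R.
Hypotheses (p_plus : forall z w, p (Cplus z w) = p z + p w)
  (p_minus : forall z w, p (Cminus z w) = p z - p w)
  (p_scal : forall r z, p (Cmult (RtoC r) z) = r * p z)
  (p_derive : forall (f : R -> C) t l, is_derive f t l -> is_derive (fun s => p (f s)) t (p l)).

Lemma part_zero : p (RtoC 0) = 0.
Proof. rewrite <- (Cmult_0_l (RtoC 0)), p_scal. ring. Qed.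

Lemma part_ext_out N U j : (j = O \/ j = S N) -> p (ext N U j) = 0.
Proof.
  intros Hj. unfold ext. destruct Hj as [->| ->]; [apply part_zero|].
  replace (Nat.leb (S N) N) with false by (symmetry; apply Nat.leb_gt; lia).
  rewrite Bool.andb_false_r. apply part_zero.
Qed.

Lemma is_derive_part N (u du : nat -> R -> C) k t :
  (forall j t, (1 <= j <= N)%nat -> is_derive (u j) t (du j t)) ->
  is_derive (fun s => p (ext N (fun j => u j s) k)) t (p (ext N (fun j => du j t) k)).
Proof.
  intros Hu. apply p_derive. unfold ext.
  destruct (andb (Nat.leb 1 k) (Nat.leb k N)) eqn:E.
  - apply Bool.andb_true_iff in E as [E1 E2]. apply Nat.leb_le in E1, E2. apply Hu. lia.
  - exact (is_derive_const (K := R_AbsRing) (V := C_R_NormedModule) (RtoC 0) t).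
Qed.

Section Grid.

Variables (N : nat) (a : R -> R).
Let h := hN N.
Let al k := a (INR (S k) * h).

Lemma part_residual U W k :
  p (Cplus (Cplus (Mop N W (S k)) (Kop N U (S k))) (Lop N a U (S k)))
  = residual h al (fun j => p (ext N U j)) (fun j => p (ext N W j)) k.
Proof.
  unfold Mop, Kop, Lop, residual, stiff, node_avg, al, h.
  replace (S k - 1)%nat with k by lia. replace (S k + 1)%nat with (S (S k)) by lia.
  repeat first [rewrite p_plus | rewrite p_minus | rewrite p_scal].
  field. apply Rgt_not_eq, hN_pos.
Qed.

Lemma part_norm_sq U W :
  sum_lt (fun k => p (Cplus (Kop N U (S k)) (Lop N a U (S k))) * p (U (S k))) N
  + sum_lt (fun k => p (Mop N W (S k)) * p (W (S k))) N
  = 2 * energy h al N (fun j => p (ext N U j)) (fun j => p (ext N W j)).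
Proof.
  rewrite <- energy_quadratic_form by (apply hN_pos || (apply part_ext_out; auto)).
  f_equal; apply sum_lt_ext; intros k Hk;
    [rewrite <- (ext_in N U (S k)) by lia | rewrite <- (ext_in N W (S k)) by lia];
    unfold Mop, Kop, Lop, stiff, node_avg, al, h;
    replace (S k - 1)%nat with k by lia; replace (S k + 1)%nat with (S (S k)) by lia;
    repeat first [rewrite p_plus | rewrite p_minus | rewrite p_scal];
    field; apply Rgt_not_eq, hN_pos.
Qed.

Lemma part_observability B T U0 U1 u du ddu :
  (1 <= N)%nat -> 0 <= B -> (forall x, 0 <= x <= 1 -> 0 <= a x <= B) -> 0 <= T ->
  is_solution N a T U0 U1 u du ddu ->
  RInt (fun t => (p (u 1%nat t) / h) ^ 2 + (p (du 1%nat t) / 2) ^ 2) 0 T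
  >= (obs_rate B * T - 2) * energy h al N (fun j => p (ext N U0 j)) (fun j => p (ext N U1 j)).
Proof.
  intros HN HB Ha HT (Hu & Hdu & Heq & Hinit).
  set (X := fun k t => p (ext N (fun j => u j t) k)).
  set (V := fun k t => p (ext N (fun j => du j t) k)).
  set (Z := fun k t => p (ext N (fun j => ddu j t) k)).
  rewrite (RInt_ext _ (fun t => (X 1%nat t / h) ^ 2 + (V 1%nat t / 2) ^ 2))
    by (intros; unfold X, V; rewrite !ext_in by lia; reflexivity).
  rewrite (energy_ext h al N _ (fun k => X k 0) _ (fun k => V k 0)).
  2, 3: intros k; unfold X, V; f_equal; apply ext_ext; intros j Hj; symmetry; apply Hinit, Hj.
  apply (observability_real N h B T al X V Z); auto.
  - apply hN_spec.
  - apply hN_pos.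
  - intros k Hk. apply Ha, grid_node_in_01, Hk.
  - intros k t. now apply is_derive_part.
  - intros k t. now apply is_derive_part.
  - intros t. apply part_ext_out. auto.
  - intros t. apply part_ext_out. auto.
  - intros t. apply part_ext_out. auto.
  - intros t. apply part_ext_out. auto.
  - intros t Ht k Hk. unfold X, Z. rewrite <- part_residual, (Heq t Ht (S k)) by lia. apply part_zero.
Qed.

Lemma part_observability_energy B T U0 U1 u du ddu :
  (1 <= N)%nat -> 0 <= B -> (forall x, 0 <= x <= 1 -> 0 <= a x <= B) -> 4 < obs_rate B * T ->
  is_solution N a T U0 U1 u du ddu ->
  RInt (fun t => (p (u 1%nat t) / h) ^ 2 + (p (du 1%nat t) / 2) ^ 2) 0 T
  >= 2 * energy h al N (fun j => p (ext N U0 j)) (fun j => p (ext N U1 j)).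
Proof.
  intros HN HB Ha HcT Hsol.
  assert (HT : 0 <= T).
  { pose proof (obs_rate_pos B HB). destruct (Rle_or_lt 0 T) as [|HT]; [assumption|]. nra. }
  pose proof (part_observability B T U0 U1 u du ddu HN HB Ha HT Hsol).
  assert (0 <= energy h al N (fun j => p (ext N U0 j)) (fun j => p (ext N U1 j))).
  { apply energy_nonneg; [apply hN_pos | intros k Hk; apply Ha, grid_node_in_01, Hk]. }
  nra.
Qed.

End Grid.

End Projection.

Lemma Re_minus z w : Re (Cminus z w) = Re z - Re w.
Proof. reflexivity. Qed.

Lemma Im_minus z w : Im (Cminus z w) = Im z - Im w.
Proof. reflexivity. Qed.

Lemma Re_scal r z : Re (Cmult (RtoC r) z) = r * Re z.
Proof. destruct z. simpl. ring. Qed.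

Lemma Im_scal r z : Im (Cmult (RtoC r) z) = r * Im z.
Proof. destruct z. simpl. ring. Qed.

Lemma is_derive_Re (f : R -> C) t l : is_derive f t l -> is_derive (fun s => Re (f s)) t (Re l).
Proof.
  intros Hf. eapply filterdiff_ext_lin;
    [exact (filterdiff_comp' f (fun z : C_R_NormedModule => fst z) t _ _ Hf
              (filterdiff_linear _ is_linear_fst))|].
  reflexivity.
Qed.

Lemma is_derive_Im (f : R -> C) t l : is_derive f t l -> is_derive (fun s => Im (f s)) t (Im l).
Proof.
  intros Hf. eapply filterdiff_ext_lin;
    [exact (filterdiff_comp' f (fun z : C_R_NormedModule => snd z) t _ _ Hf
              (filterdiff_linear _ is_linear_snd))|].
  reflexivity.
Qed.

Lemma Re_csum f n : Re (csum f n) = sum_lt (fun k => Re (f (S k))) n.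
Proof. induction n as [|n IH]; simpl; [reflexivity|]. now rewrite <- IH. Qed.

Lemma Re_cinner N Y U :
  Re (cinner N Y U) = sum_lt (fun k => Re (Y (S k)) * Re (U (S k))) N
                      + sum_lt (fun k => Im (Y (S k)) * Im (U (S k))) N.
Proof.
  unfold cinner. rewrite Re_csum, <- sum_lt_plus. apply sum_lt_ext. intros k _.
  destruct (Y (S k)), (U (S k)). simpl. ring.
Qed.

Lemma norm_sq_Re_Im N a U W :
  norm1_sq N a U + normM_sq N W =
  2 * energy (hN N) (fun k => a (INR (S k) * hN N)) N
        (fun j => Re (ext N U j)) (fun j => Re (ext N W j))
  + 2 * energy (hN N) (fun k => a (INR (S k) * hN N)) N
        (fun j => Im (ext N U j)) (fun j => Im (ext N W j)).
Proof.
  rewrite <- (part_norm_sq Re re_plus Re_minus Re_scal),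
          <- (part_norm_sq Im im_plus Im_minus Im_scal).
  unfold norm1_sq, normM_sq. rewrite !Re_cinner. ring.
Qed.

Lemma observation_Re_Im N T (u du ddu : nat -> R -> C) :
  (forall t, is_derive (u 1%nat) t (du 1%nat t)) -> (forall t, is_derive (du 1%nat) t (ddu 1%nat t)) ->
  observation N T u du =
  RInt (fun t => (Re (u 1%nat t) / hN N) ^ 2 + (Re (du 1%nat t) / 2) ^ 2) 0 T
  + RInt (fun t => (Im (u 1%nat t) / hN N) ^ 2 + (Im (du 1%nat t) / 2) ^ 2) 0 T.
Proof.
  intros Hu Hdu. unfold observation.
  rewrite <- (RInt_plus (V := R_CompleteNormedModule)).
  - apply RInt_ext. intros t _.
    assert (Hsq : forall z c, (Cmod z / c) ^ 2 = (Re z / c) ^ 2 + (Im z / c) ^ 2)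
      by (intros; unfold Rdiv; rewrite !Rpow_mult_distr, Cmod2_alt; ring).
    rewrite !Hsq. unfold plus. simpl. ring.
  - apply ex_RInt_continuous. intros t _.
    apply continuous_obs_integrand; intros s; eexists; apply is_derive_Re; auto.
  - apply ex_RInt_continuous. intros t _.
    apply continuous_obs_integrand; intros s; eexists; apply is_derive_Im; auto.
Qed.

Theorem theorem1 :
  forall a : R -> R,
    measurable_on_01 a ->
    (exists B : R, forall x, 0 <= x <= 1 -> Rabs (a x) <= B) ->
    (forall x, 0 <= x <= 1 -> 0 <= a x) ->
    exists T0 kappa0 : R, 0 < T0 /\ 0 < kappa0 /\
      forall (N : nat), (1 <= N)%nat ->
      forall T : R, T0 < T ->
      forall (U0 U1 : nat -> C) (u du ddu : nat -> R -> C),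
        is_solution N a T U0 U1 u du ddu ->
        observation N T u du >= kappa0 * (norm1_sq N a U0 + normM_sq N U1).
Proof.
  intros a _ [B HB] Ha0.
  assert (Ha : forall x, 0 <= x <= 1 -> 0 <= a x <= B).
  { intros x Hx. split; [auto|]. eapply Rle_trans; [apply Rle_abs | auto]. }
  assert (HB0 : 0 <= B) by (destruct (Ha 0 ltac:(lra)); lra).
  pose proof (obs_rate_pos B HB0) as Hc.
  assert (HT0 : 0 < 4 / obs_rate B) by (apply Rdiv_lt_0_compat; lra).
  exists (4 / obs_rate B), 1. split; [exact HT0 | split; [lra|]].
  intros N HN T HT U0 U1 u du ddu Hsol.
  assert (HcT : 4 < obs_rate B * T).
  { apply Rmult_lt_compat_l with (r := obs_rate B) in HT; [|exact Hc].
    replace (obs_rate B * (4 / obs_rate B)) with 4 in HT by (field; lra). exact HT. }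
  pose proof Hsol as (Hu & Hdu & _).
  rewrite (observation_Re_Im N T u du ddu), norm_sq_Re_Im by (intros; apply Hu || apply Hdu; lia).
  pose proof (part_observability_energy Re re_plus Re_minus Re_scal is_derive_Re N a B T
                U0 U1 u du ddu HN HB0 Ha HcT Hsol).
  pose proof (part_observability_energy Im im_plus Im_minus Im_scal is_derive_Im N a B T
                U0 U1 u du ddu HN HB0 Ha HcT Hsol).
  lra.
Qed.
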